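(* Let $U\subseteq\mathbb{C}^{n\times n}$ and $V\subseteq\mathbb{C}^{k\times k}$ be linear subspaces and $U\circledast V\subseteq\mathbb{C}^{nk\times nk}$ the span of all Kronecker products $A\circledast B$ with $A\in U$, $B\in V$. Let $\mu_U,\mu_V,\mu_{U\circledast V}$ be the structure tensors of the matrix-vector products $U\times\mathbb{C}^n\to\mathbb{C}^n$, $V\times\mathbb{C}^k\to\mathbb{C}^k$, $(U\circledast V)\times\mathbb{C}^{nk}\to\mathbb{C}^{nk}$. Suppose $\operatorname{rank}(\mu_U)=\dim U$, $\operatorname{rank}(\mu_V)=\dim V$, and that the images of $U\otimes\mathbb{C}^n\to\mathbb{C}^n$ and $V\otimes\mathbb{C}^k\to\mathbb{C}^k$ (induced by the matrix-vector products) are all of $\mathbb{C}^n$ and $\mathbb{C}^k$ respectively. Then $\operatorname{rank}(\mu_{U\circledast V})=\operatorname{rank}(\mu_U)\operatorname{rank}(\mu_V)$.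
   Context: $\circledast$ denotes the Kronecker product of matrices. Structure tensor of a bilinear map $\beta:U\times V\to W$: the unique $\mu_\beta\in U^*\otimes V^*\otimes W$ with $\beta(u,v)=\mu_\beta(u,v,\cdot)$. Rank: least number of decomposable tensors summing to the tensor. *)

From HB Require Import structures.
From mathcomp Require Import all_boot all_order all_algebra.
Set Implicit Arguments. Unset Strict Implicit. Unset Printing Implicit Defensive.
Import Order.TTheory GRing.Theory Num.Theory.
Local Open Scope ring_scope.

Lemma kron_div_proof n k (p : 'I_(n * k)) : (p %/ k < n)%N.
Proof.
case: k p => [|k] p; first by case: p => /= m; rewrite muln0.
by rewrite ltn_divLR // ltn_ord.
Qed.

Lemma kron_mod_proof n k (p : 'I_(n * k)) : (p %% k < k)%N.
Proof.
case: k p => [|k] p; first by case: p => /= m; rewrite muln0.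
by rewrite ltn_pmod.
Qed.

Definition kron_fst n k (p : 'I_(n * k)) : 'I_n := Ordinal (kron_div_proof p).
Definition kron_snd n k (p : 'I_(n * k)) : 'I_k := Ordinal (kron_mod_proof p).

(* Kronecker product A [x] B : entry ((i1,i2),(j1,j2)) = A i1 j1 * B i2 j2,
   where (i1,i2) is identified with i1 * k + i2. *)
Definition kron (C : pzRingType) n k (A : 'M[C]_n) (B : 'M[C]_k) : 'M[C]_(n * k) :=
  \matrix_(p, q) (A (kron_fst p) (kron_fst q) * B (kron_snd p) (kron_snd q)).

Definition is_kron_span (C : fieldType) n k (U : {vspace 'M[C]_n})
    (V : {vspace 'M[C]_k}) (W : {vspace 'M[C]_(n * k)}) : Prop :=
  (forall A B, A \in U -> B \in V -> kron A B \in W) /\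
  (forall W' : {vspace 'M[C]_(n * k)},
     (forall A B, A \in U -> B \in V -> kron A B \in W') -> (W <= W')%VS).

(* The structure tensor mu_U of the matrix-vector product U x C^m -> C^m,
   an element of U^* [x] (C^m)^* [x] C^m, is a sum of r decomposable tensors
   alpha_i [x] beta_i [x] w_i  (alpha_i a linear form on U, beta_i a linear form
   on C^m given by a row vector, w_i in C^m). *)
Definition mv_rank_le (C : fieldType) m (U : {vspace 'M[C]_m}) (r : nat) : Prop :=
  exists (alpha : 'I_r -> 'M[C]_m -> C) (beta : 'I_r -> 'rV[C]_m)
         (w : 'I_r -> 'cV[C]_m),
    (forall i (c : C) A B, A \in U -> B \in U ->
       alpha i (c *: A + B) = c * alpha i A + alpha i B) /\
    (forall A (v : 'cV[C]_m), A \in U ->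
       A *m v = \sum_(i < r) (alpha i A * (beta i *m v) 0 0) *: w i).

Definition mv_rank_is (C : fieldType) m (U : {vspace 'M[C]_m}) (r : nat) : Prop :=
  mv_rank_le U r /\ forall r', mv_rank_le U r' -> (r <= r')%N.

Definition mv_image_full (C : fieldType) m (U : {vspace 'M[C]_m}) : Prop :=
  forall W : {vspace 'cV[C]_m},
    (forall A (v : 'cV[C]_m), A \in U -> A *m v \in W) -> W = fullv.

From HB Require Import structures.
From mathcomp Require Import all_boot all_order all_algebra.
From mathcomp Require Import zify.
Import Order.TTheory GRing.Theory Num.Theory.
Local Open Scope ring_scope.
Set Implicit Arguments. Unset Strict Implicit.

(* A decomposition [mu_U = sum_(i < r) alpha_i (x) beta_i (x) w_i] determines
   every A in U from the r numbers [alpha_i A], so [dim U <= rank mu_U]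
   (flattening). When equality holds, the decomposition writes every A in U as
   [sum_i alpha_i A *: (w_i *m beta_i)], so U has a basis of rank-one matrices.
   Kronecker products of rank-one matrices are rank-one, and the products of
   two such bases form a basis of U (x) V; this basis gives a decomposition of
   length [dim U * dim V = dim (U (x) V)], matching the flattening bound. *)

Lemma kron_idx_proof d e (i : 'I_d) (j : 'I_e) : (i * e + j < d * e)%N.
Proof. by have := ltn_ord i; have := ltn_ord j; nia. Qed.

Definition kron_idx d e (i : 'I_d) (j : 'I_e) : 'I_(d * e) :=
  Ordinal (kron_idx_proof i j).

Lemma kron_fst_idx d e (i : 'I_d) (j : 'I_e) : kron_fst (kron_idx i j) = i.
Proof.
apply: val_inj => /=; have e_gt0 : (0 < e)%N by case: j => /= *; lia.
by rewrite divnMDl // divn_small ?addn0.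
Qed.

Lemma kron_snd_idx d e (i : 'I_d) (j : 'I_e) : kron_snd (kron_idx i j) = j.
Proof. by apply: val_inj => /=; rewrite modnMDl modn_small. Qed.

Lemma kron_idxK d e (p : 'I_(d * e)) : kron_idx (kron_fst p) (kron_snd p) = p.
Proof. by apply: val_inj => /=; rewrite -divn_eq. Qed.

Lemma big_kron_idx (R : Type) (idx : R) (op : Monoid.com_law idx) d e
    (F : 'I_(d * e) -> R) :
  \big[op/idx]_(p < d * e) F p =
  \big[op/idx]_(i < d) \big[op/idx]_(j < e) F (kron_idx i j).
Proof.
rewrite pair_big (reindex (fun x : 'I_d * 'I_e => kron_idx x.1 x.2)) //=.
exists (fun p => (kron_fst p, kron_snd p)) => [[i j] _|p _] /=.
  by rewrite kron_fst_idx kron_snd_idx.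
exact: kron_idxK.
Qed.

Section Kronecker.
Variable C : fieldType.

Definition kron_col n k (w : 'cV[C]_n) (w' : 'cV[C]_k) : 'cV[C]_(n * k) :=
  \col_p (w (kron_fst p) 0 * w' (kron_snd p) 0).

Definition kron_row n k (b : 'rV[C]_n) (b' : 'rV[C]_k) : 'rV[C]_(n * k) :=
  \row_p (b 0 (kron_fst p) * b' 0 (kron_snd p)).

Definition kron_tuple n k d e (M : d.-tuple 'M[C]_n) (N : e.-tuple 'M[C]_k) :
    (d * e).-tuple 'M[C]_(n * k) :=
  [tuple kron M`_(kron_fst p) N`_(kron_snd p) | p < d * e].

Definition outer_prods m r (w : 'I_r -> 'cV[C]_m) (b : 'I_r -> 'rV[C]_m) :
    r.-tuple 'M[C]_m :=
  [tuple w i *m b i | i < r].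

Lemma kron_sum_scale n k d e (a : 'I_d -> C) (M : 'I_d -> 'M[C]_n)
    (a' : 'I_e -> C) (N : 'I_e -> 'M[C]_k) :
  kron (\sum_i a i *: M i) (\sum_j a' j *: N j) =
  \sum_i \sum_j (a i * a' j) *: kron (M i) (N j).
Proof.
apply/matrixP => p q; rewrite mxE !summxE mulr_suml; apply: eq_bigr => i _.
by rewrite !summxE mulr_sumr; apply: eq_bigr => j _; rewrite !mxE mulrACA.
Qed.

Lemma kron_outer n k (w : 'cV[C]_n) (b : 'rV[C]_n) (w' : 'cV[C]_k) (b' : 'rV[C]_k) :
  kron (w *m b) (w' *m b') = kron_col w w' *m kron_row b b'.
Proof. by apply/matrixP => p q; rewrite !mxE !big_ord1 !mxE mulrACA. Qed.

Lemma kron_outer_prods n k d e (w : 'I_d -> 'cV[C]_n) (b : 'I_d -> 'rV[C]_n)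
    (w' : 'I_e -> 'cV[C]_k) (b' : 'I_e -> 'rV[C]_k) :
  kron_tuple (outer_prods w b) (outer_prods w' b') =
  outer_prods (fun p => kron_col (w (kron_fst p)) (w' (kron_snd p)))
              (fun p => kron_row (b (kron_fst p)) (b' (kron_snd p))).
Proof. by apply: eq_mktuple => p; rewrite !nth_mktuple kron_outer. Qed.

(* Reading the relation entrywise at [(a, a2), (b, b2)] gives, for fixed
   [(a, b)], a relation among the [N`_j]; freeness of N kills it, and then
   freeness of M kills the coefficients. *)
Lemma kron_tuple_free n k d e (M : d.-tuple 'M[C]_n) (N : e.-tuple 'M[C]_k) :
  free M -> free N -> free (kron_tuple M N).
Proof.
move=> /freeP freeM /freeP freeN; apply/freeP => c sum_c0 p.
rewrite -(kron_idxK p); move: (kron_fst p) (kron_snd p) => i j.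
have sumN0 a b : \sum_j' ((\sum_i' c (kron_idx i' j') *: M`_i') a b) *: N`_j' = 0.
  apply/matrixP => a2 b2.
  have := congr1 (fun X : 'M_(n * k) => X (kron_idx a a2) (kron_idx b b2)) sum_c0.
  rewrite [in RHS]mxE summxE => entry0.
  rewrite [in RHS]mxE -[RHS]entry0 big_kron_idx exchange_big summxE; apply: eq_bigr => j' _.
  rewrite mxE summxE mulr_suml; apply: eq_bigr => i' _.
  by rewrite !mxE nth_mktuple !mxE !kron_fst_idx !kron_snd_idx mulrA.
have sumM0 : \sum_i' c (kron_idx i' j) *: M`_i' = 0.
  by apply/matrixP => a b; rewrite mxE (freeN _ (sumN0 a b) j).
exact: freeM sumM0 i.
Qed.

Lemma mem_nth_basis (vT : vectType C) (U : {vspace vT}) r (X : r.-tuple vT)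
    (i : 'I_r) :
  basis_of U X -> X`_i \in U.
Proof.
move=> basisX; rewrite -(span_basis basisX) memv_span // mem_nth //.
by rewrite size_tuple.
Qed.

Lemma kron_tuple_basis n k d e (U : {vspace 'M[C]_n}) (V : {vspace 'M[C]_k})
    (W : {vspace 'M[C]_(n * k)}) (M : d.-tuple 'M[C]_n) (N : e.-tuple 'M[C]_k) :
  is_kron_span U V W -> basis_of U M -> basis_of V N ->
  basis_of W (kron_tuple M N).
Proof.
move=> [kronW minW] basisM basisN.
have freeK := kron_tuple_free (basis_free basisM) (basis_free basisN).
have sub_spanK : (W <= <<kron_tuple M N>>)%VS.
  apply: minW => A B; rewrite -(span_basis basisM) -(span_basis basisN).
  move=> /coord_span -> /coord_span ->; rewrite kron_sum_scale.
  apply: memv_suml => i _; apply: memv_suml => j _; apply: memvZ.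
  have -> : kron M`_i N`_j = (kron_tuple M N)`_(kron_idx i j).
    by rewrite nth_mktuple kron_fst_idx kron_snd_idx.
  by rewrite memv_span // mem_nth // size_tuple.
rewrite basisEfree freeK size_tuple /=; apply/andP; split.
  apply/span_subvP => _ /(tnthP (kron_tuple M N)) [p ->]; rewrite (tnth_nth 0) nth_mktuple.
  exact: kronW (mem_nth_basis _ basisM) (mem_nth_basis _ basisN).
by have := dimvS sub_spanK; move/eqP: freeK => ->; rewrite size_tuple.
Qed.

End Kronecker.

Section StructureTensorRank.
Variable C : fieldType.

Lemma mulmx_colP m (A B : 'M[C]_m) : (forall v : 'cV[C]_m, A *m v = B *m v) -> A = B.
Proof.
move=> eqAB; apply/matrixP => a j.
have := congr1 (fun v : 'cV_m => v a 0) (eqAB (delta_mx j 0)).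
by rewrite -!colE !mxE.
Qed.

Lemma rank_one_apply m (w : 'cV[C]_m) (b : 'rV[C]_m) (v : 'cV[C]_m) :
  w *m b *m v = (b *m v) 0 0 *: w.
Proof. by rewrite -mulmxA {1}[b *m v]mx11_scalar mul_mx_scalar. Qed.

Lemma linear_on_sum (vT : vectType C) (U : {vspace vT}) (f : vT -> C)
    (I : Type) (s : seq I) (a : I -> C) (X : I -> vT) :
  (forall c A B, A \in U -> B \in U -> f (c *: A + B) = c * f A + f B) ->
  (forall i, X i \in U) ->
  f (\sum_(i <- s) a i *: X i) = \sum_(i <- s) a i * f (X i).
Proof.
move=> linf XU; have f0 : f 0 = 0.
  by have := linf (-1) 0 0 (mem0v _) (mem0v _); rewrite scaler0 add0r mulN1r addNr.
elim: s => [|x s IHs]; first by rewrite !big_nil.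
by rewrite !big_cons linf ?IHs // memv_suml // => i _; apply: memvZ.
Qed.

Lemma dimv_le_mv_rank m (U : {vspace 'M[C]_m}) r : mv_rank_le U r -> (\dim U <= r)%N.
Proof.
case=> alpha [beta [w [lin_alpha decomp]]].
set X := vbasis U.
have XU j : X`_j \in U.
  have [j_lt|j_ge] := ltnP j (\dim U); last by rewrite nth_default ?mem0v // size_tuple.
  by rewrite (vbasis_mem (mem_nth 0 _)) // size_tuple.
pose Y := [tuple \row_(i < r) alpha i X`_j | j < \dim U].
suff freeY : free Y.
  by have := dimvS (subvf <<Y>>); rewrite dimvf; move/eqP: freeY => ->;
     rewrite size_tuple /dim /= mul1n.
apply/freeP => a sum_a0 j.
have sumX0 : \sum_(j < \dim U) a j *: X`_j = 0.
  apply: mulmx_colP => v; rewrite mul0mx decomp ?memv_suml // => [|i _]; last exact: memvZ.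
  apply: big1 => i _; rewrite (linear_on_sum _ _ (lin_alpha i)) //.
  have := congr1 (fun y : 'rV_r => y 0 i) sum_a0; rewrite summxE mxE.
  under eq_bigr do rewrite mxE nth_mktuple mxE.
  by move=> ->; rewrite mul0r scale0r.
by move/freeP: (basis_free (vbasisP U)) => /(_ a sumX0 j).
Qed.

Lemma mv_rank_le_span m r (w : 'I_r -> 'cV[C]_m) (b : 'I_r -> 'rV[C]_m)
    (U : {vspace 'M[C]_m}) :
  (U <= <<outer_prods w b>>)%VS -> mv_rank_le U r.
Proof.
move=> sub_span; exists (fun i A => coord (outer_prods w b) i A), b, w; split.
  by move=> i c A B _ _; rewrite linearP.
move=> A v AU; rewrite {1}(coord_span (subvP sub_span _ AU)) mulmx_suml.
by apply: eq_bigr => i _; rewrite nth_mktuple -scalemxAl rank_one_apply scalerA.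
Qed.

Lemma mv_rank_dim_basis m (U : {vspace 'M[C]_m}) :
  mv_rank_le U (\dim U) ->
  exists w b, basis_of U (outer_prods w b : (\dim U).-tuple 'M[C]_m).
Proof.
case=> alpha [b [w [_ decomp]]]; exists w, b.
rewrite basisEdim size_tuple leqnn andbT; apply/subvP => A AU.
have -> : A = \sum_(i < \dim U) alpha i A *: (outer_prods w b)`_i.
  apply: mulmx_colP => v; rewrite decomp // mulmx_suml; apply: eq_bigr => i _.
  by rewrite nth_mktuple -scalemxAl rank_one_apply scalerA.
by apply: memv_suml => i _; rewrite memvZ // memv_span // mem_nth // size_tuple.
Qed.

End StructureTensorRank.

Theorem mainTheorem12 (C : numClosedFieldType) (n k : nat)
    (U : {vspace 'M[C]_n}) (V : {vspace 'M[C]_k}) (W : {vspace 'M[C]_(n * k)})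
    (rU rV : nat) :
  is_kron_span U V W ->
  mv_rank_is U rU -> mv_rank_is V rV ->
  rU = \dim U -> rV = \dim V ->
  mv_image_full U -> mv_image_full V ->
  mv_rank_is W (rU * rV).
Proof.
move=> kronW [rankU _] [rankV _] eqU eqV _ _; subst rU rV.
have [w [b basisU]] := mv_rank_dim_basis rankU.
have [w' [b' basisV]] := mv_rank_dim_basis rankV.
have := kron_tuple_basis kronW basisU basisV; rewrite kron_outer_prods => basisW.
split; first by rewrite -(span_basis basisW); exact: mv_rank_le_span (subvv _).
by move=> r /dimv_le_mv_rank; rewrite (size_basis basisW).
Qed.
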